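(* Consider an instance of the MSSN-MC-HC problem with $m=|Q|$ sources and costs $c_s>0$, $c_r>0$, and suppose $\frac{c_s}{c_r}\ge \overline{m}(\overline{m}+1)(h_{\max}-1)$ for some integer $\overline{m}$ with $1\le \overline{m}<m$. Consider any iteration $j$ of the greedy phase of SmartSelect at which the number $u$ of uncovered sources satisfies $u>\overline{m}$. Suppose $b_1,b_2\in B^{(j)}$ are unpicked sinks such that $Q_1^{(j)}$ equals the set of all currently uncovered sources, and $1\le |Q_2^{(j)}|\le \overline{m}$. Then $C_1^{(j)}\le C_2^{(j)}$, i.e., the algorithm does not favor $b_2$ over $b_1$.
   Context: MSSN-MC-HC problem: given a finite undirected graph $G=(V,E)$ with $V=Q\cup R\cup B$ (pairwise disjoint; $Q$ = sources, $R$ = potential relay locations, $B$ = potential sink locations), costs $c_s$ per sink and $c_r$ per relay, and a positive integer $h_{\max}$, select $B'\subseteq B$, $R'\subseteq R$ such that in the subgraph induced by $Q\cup R'\cup B'$ every source has a path of at most $h_{\max}$ edges to some sink of $B'$, minimizing $c_s|B'|+c_r|R'|$. SmartSelect algorithm: (1) If for some $b\in B$ every source has a path of at most $h_{\max}$ edges to $b$ in the subgraph induced by $Q\cup B$, output $(\{b\},\emptyset)$. (2) If some source has no path of at most $h_{\max}$ edges in $G$ to any sink, declare infeasible. (3) For each $b_i\in B$ let $Q_i$ be the set of sources whose shortest path to $b_i$ in $G$ has at most $h_{\max}$ edges, and $R_i$ the set of relays whose shortest path to $b_i$ has at most $h_{\max}-1$ edges. (4) Greedy phase, iterations $j=0,1,\dots$: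 $B^{(0)}=B$, $Q_i^{(0)}=Q_i$; $B^{(j)}$ is the set of sinks not yet picked and $Q_i^{(j)}$ the set of sources of $Q_i$ not yet covered. In iteration $j$, for each $b_i\in B^{(j)}$, a relay-selection subroutine (e.g. the SPTiRP algorithm) applied to the subgraph of $G$ induced by $Q_i^{(j)}\cup R_i\cup\{b_i\}$ returns a set $\hat R_i^{(j)}\subseteq R_i$ consisting of the relays on one chosen path of at most $h_{\max}$ edges from each source of $Q_i^{(j)}$ to $b_i$ (so every source of $Q_i^{(j)}$ reaches $b_i$ within $h_{\max}$ hops using only $Q_i^{(j)}\cup\hat R_i^{(j)}\cup\{b_i\}$). Let $n_i^{(j)}$ be the number of relays in $\hat R_i^{(j)}$ not selected in earlier iterations (earlier-selected relays have cost zero thereafter), and $C_i^{(j)}=\frac{c_s+c_r n_i^{(j)}}{|Q_i^{(j)}|}$. The sink $b_i$ with least $C_i^{(j)}$ is picked (ties broken in favor of larger $|Q_i^{(j)}|$), its sources $Q_i^{(j)}$ become covered and the relays $\hat R_i^{(j)}$ are selected. Stop when all sources are covered; output the picked sinks and selected relays. *)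

From HB Require Import structures.
From mathcomp Require Import all_boot all_order all_algebra.
Set Implicit Arguments. Unset Strict Implicit. Unset Printing Implicit Defensive.
Import Order.TTheory GRing.Theory Num.Theory.

Definition hop_reach (T : finType) (e : rel T) (W : {set T}) (h : nat)
    (x y : T) : bool :=
  [exists n : 'I_h.+1, [exists t : n.-tuple T,
     [&& path e x t, last x t == y, uniq (x :: t) &
         all (fun v => v \in W) (x :: t)]]].

(* Q_i : sources whose shortest path (in G) to sink b has at most h edges. *)
Definition Qset (T : finType) (e : rel T) (Q : {set T}) (h : nat) (b : T)
  : {set T} := [set q in Q | hop_reach e setT h q b].

(* R_i : relays whose shortest path (in G) to b has at most h-1 edges. *)
Definition Rset (T : finType) (e : rel T) (Rl : {set T}) (h : nat) (b : T)
  : {set T} := [set r in Rl | hop_reach e setT h.-1 r b].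

(* Q_i^(j) : sources of Q_i not yet covered (U = uncovered sources). *)
Definition Qcur (T : finType) (e : rel T) (Q : {set T}) (h : nat) (b : T)
  (U : {set T}) : {set T} := Qset e Q h b :&: U.

(* Specification of the relay-selection subroutine at iteration j for sink b:
   Rhat is exactly the set of relays lying on one chosen simple path of at most
   h edges, for each source q of Q_i^(j), from q to b inside the subgraph induced
   by Q_i^(j) \cup R_i \cup {b}. *)
Definition relay_selection (T : finType) (e : rel T) (Q Rl : {set T}) (h : nat)
  (b : T) (U Rhat : {set T}) : Prop :=
  let Qj := Qcur e Q h b U in
  let W := Qj :|: Rset e Rl h b :|: [set b] in
  exists P : T -> seq T,
    (forall q, q \in Qj ->
       [/\ path e q (P q), last q (P q) = b, size (P q) <= h,
           uniq (q :: P q) & all (fun v => v \in W) (q :: P q)])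
    /\ Rhat = \bigcup_(q in Qj) [set r in Rl | r \in P q].

(* n_i^(j): relays of Rhat not selected in earlier iterations (S). *)
Definition new_relays (T : finType) (S Rhat : {set T}) : nat := #|Rhat :\: S|.

Definition cost_eff (R : realFieldType) (T : finType) (e : rel T)
  (Q : {set T}) (h : nat) (cs cr : R) (S : {set T}) (b : T) (U Rhat : {set T})
  : R :=
  ((cs + cr * (new_relays S Rhat)%:R) / (#|Qcur e Q h b U|)%:R)%R.

From HB Require Import structures.
From mathcomp Require Import all_boot all_order all_algebra.
From mathcomp Require Import zify lra.
Import Order.TTheory GRing.Theory Num.Theory.
Set Implicit Arguments. Unset Strict Implicit. Unset Printing Implicit Defensive.

(* Each of the u chosen paths to b1 has at most hmax - 1 relays, its last
   vertex being the sink, so b1 needs at most n1 <= u (hmax - 1) new relays.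
   Comparing C1 = (cs + cr n1) / u with C2 >= cs / k for k <= mbar < u, it
   suffices that cr k n1 <= cs (u - k), which follows from
   k u <= mbar (mbar + 1) (u - k) and mbar (mbar + 1) (hmax - 1) cr <= cs. *)

Lemma leq_card_bigcup (T I : finType) (A : {set I}) (F : I -> {set T}) :
  #|\bigcup_(i in A) F i| <= \sum_(i in A) #|F i|.
Proof.
elim/big_rec2: _ => [|i n X _ IH]; first by rewrite cards0.
exact: leq_trans (leq_card_setU _ X).1 (leq_add (leqnn _) IH).
Qed.

Lemma card_mem_path_le (T : finType) (A : {set T}) (x b : T) (s : seq T) :
  b \notin A -> last x s = b -> #|[set r in A | r \in s]| <= (size s).-1.
Proof.
move=> bA; case/lastP: s => [|s y]; first by rewrite eq_card0 // => r; rewrite !inE andbF.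
rewrite last_rcons size_rcons => -> /=.
have -> : [set r in A | r \in rcons s b] = [set r in [seq z <- s | z \in A]].
  apply/setP => r; rewrite !inE mem_rcons inE mem_filter.
  by have [->|] := eqVneq r b; rewrite ?(negbTE bA).
by rewrite cardsE (leq_trans (card_size _)) // size_filter count_size.
Qed.

Lemma card_relay_selection_le (T : finType) (e : rel T) (Q Rl : {set T})
    (h : nat) (b : T) (U Rhat : {set T}) :
  b \notin Rl -> relay_selection e Q Rl h b U Rhat ->
  #|Rhat| <= #|Qcur e Q h b U| * (h - 1).
Proof.
move=> bRl [P [hP ->]].
apply: leq_trans; first exact: leq_card_bigcup.
rewrite -sum_nat_const.
apply: leq_sum => q /hP [_ Pq_last Pq_size _ _].
by apply: leq_trans (card_mem_path_le bRl Pq_last) _; rewrite -subn1 leq_sub2r.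
Qed.

Lemma leq_mul_mulSn_sub (k m u : nat) :
  0 < k <= m -> m < u -> k * u <= m * m.+1 * (u - k).
Proof.
move=> /andP[k_gt0 km] mu_lt.
have mu_le : m * u <= m * m.+1 * (u - m) by rewrite -mulnA leq_mul2l; nia.
apply: leq_trans (leq_mul km (leqnn u)) (leq_trans mu_le _).
by rewrite leq_mul2l leq_sub2l ?orbT.
Qed.

Section CostRatio.
Local Open Scope ring_scope.

Lemma ler_cost_ratio (R : realFieldType) (cs cr n1 n2 k u : R) :
  0 < k -> 0 < u -> 0 <= cr * n2 -> cr * (k * n1) <= cs * (u - k) ->
  (cs + cr * n1) / u <= (cs + cr * n2) / k.
Proof.
move=> k_gt0 u_gt0 n2_ge0 hn1.
rewrite ler_pdivrMr // mulrAC ler_pdivlMr //.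
have : 0 <= cr * n2 * u by rewrite mulr_ge0 // ltW.
nra.
Qed.

End CostRatio.

Theorem lemma1 (R : realFieldType) (T : finType) (e : rel T)
  (Q Rl B : {set T}) (cs cr : R) (hmax mbar : nat)
  (U S Pk : {set T}) (b1 b2 : T) (Rhat1 Rhat2 : {set T}) :
  symmetric e -> irreflexive e ->
  Q :|: Rl :|: B = setT ->
  [disjoint Q & Rl] -> [disjoint Q & B] -> [disjoint Rl & B] ->
  (0 < cs)%R -> (0 < cr)%R -> 0 < hmax ->
  1 <= mbar -> mbar < #|Q| ->
  ((mbar * (mbar + 1) * (hmax - 1))%:R <= cs / cr)%R ->
  (* state of the greedy phase at iteration j *)
  U \subset Q -> S \subset Rl -> Pk \subset B ->
  b1 \in B :\: Pk -> b2 \in B :\: Pk ->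
  mbar < #|U| ->
  Qcur e Q hmax b1 U = U ->
  1 <= #|Qcur e Q hmax b2 U| <= mbar ->
  relay_selection e Q Rl hmax b1 U Rhat1 ->
  relay_selection e Q Rl hmax b2 U Rhat2 ->
  (cost_eff e Q hmax cs cr S b1 U Rhat1 <= cost_eff e Q hmax cs cr S b2 U Rhat2)%R.
Proof.
move=> _ _ _ _ _ dRB _ cr_gt0 _ _ _ ratio _ _ _ b1B _ mu hQ1 hk sel1 _.
rewrite /cost_eff /new_relays hQ1.
set k := #|Qcur e Q hmax b2 U| in hk *; set u := #|U| in mu *.
set n1 := #|Rhat1 :\: S|; set N := mbar * (mbar + 1) * (hmax - 1) in ratio.
have b1Rl : b1 \notin Rl by case/setDP: b1B => /(disjointFl dRB) ->.
have n1_le : n1 <= u * (hmax - 1).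
  rewrite /u -hQ1 (leq_trans (subset_leq_card (subsetDl _ _))) //.
  exact: card_relay_selection_le sel1.
have kn1_le : k * n1 <= N * (u - k).
  apply: leq_trans (leq_mul (leqnn k) n1_le) _.
  rewrite /N mulnA [leqRHS]mulnAC addn1 leq_mul2r leq_mul_mulSn_sub ?orbT //.
have k_gt0 : 0 < k by case/andP: hk.
have ku : k < u by case/andP: hk => _ km; apply: leq_ltn_trans km mu.
have crN : (N%:R * cr <= cs)%R by rewrite -ler_pdivlMr.
apply: ler_cost_ratio.
- by rewrite ltr0n.
- by rewrite ltr0n (ltn_trans k_gt0 ku).
- exact: mulr_ge0 (ltW cr_gt0) (ler0n _ _).
rewrite -natrM -(natrB _ (ltnW ku)).
apply: (@le_trans _ _ (cr * (N * (u - k))%:R)%R); first by rewrite ler_pM2l ?ler_nat.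
rewrite natrM mulrA [(cr * _)%R]mulrC.
by rewrite ler_wpM2r.
Qed.
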